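(* Let $0<p<1$. Then $$w_n^{\lfloor np-\epsilon(n)\rfloor}(p)\geq\frac{1}{p}-n^{-\Theta(\log n)}\qquad\text{and}\qquad w_n^{\lfloor np+\epsilon(n)\rfloor}(p)\leq n^{-\Theta(\log n)},$$ i.e. there exist functions $f,g:\mathbb{N}\to\mathbb{R}^+_0$ with $f(n)=\Theta(\log n)$ and $g(n)=\Theta(\log n)$ such that $w_n^{\lfloor np-\epsilon(n)\rfloor}(p)\geq\frac1p-n^{-f(n)}$ and $w_n^{\lfloor np+\epsilon(n)\rfloor}(p)\leq n^{-g(n)}$ for all sufficiently large $n$.
   Context: For $0<p<1$, $n\in\mathbb{N}$ and $0\le i\le n$, $w_n^i(p)=\sum_{j=i}^n\binom{j}{i}p^i(1-p)^{j-i}$. Define $\epsilon:\mathbb{N}\to\mathbb{R}^+$ by $\epsilon(n)=\sqrt{n}\log n$ for $n\geq2$ and $\epsilon(n)=1$ otherwise. For $f,g:\mathbb{N}\to\mathbb{R}^+_0$, $f(n)=\Theta(g(n))$ means there are $C_1,C_2>0$ with $C_1g(n)\le f(n)\le C_2 g(n)$ for all sufficiently large $n$. *)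

From Stdlib Require Import Reals Lra Lia ZArith Arith List.
Open Scope R_scope.

(* w_n^i(p) = sum_{j=i}^n C(j,i) p^i (1-p)^(j-i); empty sum (= 0) if i > n. *)
Definition w (n i : nat) (p : R) : R :=
  fold_right Rplus 0
    (map (fun j => Binomial.C j i * p ^ i * (1 - p) ^ (j - i)) (seq i (S n - i))).

Definition eps (n : nat) : R :=
  if (2 <=? n)%nat then sqrt (INR n) * ln (INR n) else 1.

Definition floorR (r : R) : Z := Int_part r.

Definition BigTheta (f g : nat -> R) : Prop :=
  exists C1 C2 : R, 0 < C1 /\ 0 < C2 /\
    exists N : nat, forall n : nat, (N <= n)%nat ->
      C1 * g n <= f n /\ f n <= C2 * g n.

Definition lnN (n : nat) : R := ln (INR n).

From Stdlib Require Import Reals ZArith Lra Lia List.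
Open Scope R_scope.

(* Since [p * w_n^i(p)] is the probability that [n + 1] Bernoulli(p) trials
   give more than [i] successes, [1/p - w_n^i(p)] and [w_n^j(p)] are, up to the
   factor [1/p], tails of Bin(n + 1, p) at distance about [eps n = sqrt n ln n]
   from the mean.  Chernoff bounds make such a tail at most
   [exp (- eps n ^ 2 / (32 (n + 1)))], i.e. at most [exp (- (ln n) ^ 2 / 64)],
   which is below [p * n ^ (- ln n / 128)] for large [n]. *)

(* [binom_expect p m g] is the expectation of [g K] for [K ~ Bin(m, p)],
   computed by conditioning on the outcome of one trial. *)
Fixpoint binom_expect (p : R) (m : nat) (g : nat -> R) : R :=
  match m with
  | O => g O
  | S m' => (1 - p) * binom_expect p m' g + p * binom_expect p m' (fun k => g (S k))
  end.

Definition ind_ge (s k : nat) : R := if (s <=? k)%nat then 1 else 0.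

Definition ind_eq (i k : nat) : R := if (k =? i)%nat then 1 else 0.

Lemma C_n_0 n : C n 0 = 1.
Proof. unfold C. rewrite Nat.sub_0_r. simpl. field. apply INR_fact_neq_0. Qed.

Lemma C_n_n n : C n n = 1.
Proof. unfold C. rewrite Nat.sub_diag. simpl. field. apply INR_fact_neq_0. Qed.

Section BinomExpect.

Variable p : R.

Lemma binom_expect_ext m :
  forall g h, (forall k, g k = h k) -> binom_expect p m g = binom_expect p m h.
Proof.
  induction m as [|m IH]; intros g h H; simpl.
  - apply H.
  - rewrite (IH g h H), (IH (fun k => g (S k)) (fun k => h (S k))); auto.
Qed.

Lemma binom_expect_lin m : forall a b g h,
  binom_expect p m (fun k => a * g k + b * h k)
  = a * binom_expect p m g + b * binom_expect p m h.
Proof.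
  induction m as [|m IH]; intros a b g h; simpl.
  - reflexivity.
  - rewrite (IH a b g h), (IH a b (fun k => g (S k)) (fun k => h (S k))). ring.
Qed.

Lemma binom_expect_scal m a g :
  binom_expect p m (fun k => a * g k) = a * binom_expect p m g.
Proof.
  rewrite (binom_expect_ext m _ (fun k => a * g k + 0 * g k)) by (intros; ring).
  rewrite binom_expect_lin. ring.
Qed.

Lemma binom_expect_add m g h :
  binom_expect p m (fun k => g k + h k) = binom_expect p m g + binom_expect p m h.
Proof.
  rewrite (binom_expect_ext m _ (fun k => 1 * g k + 1 * h k)) by (intros; ring).
  rewrite binom_expect_lin. ring.
Qed.

Lemma binom_expect_mono m : 0 <= p <= 1 ->
  forall g h, (forall k, g k <= h k) -> binom_expect p m g <= binom_expect p m h.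
Proof.
  intros Hp. induction m as [|m IH]; intros g h H; simpl.
  - apply H.
  - pose proof (IH g h H).
    pose proof (IH (fun k => g (S k)) (fun k => h (S k)) (fun k => H (S k))).
    nra.
Qed.

Lemma binom_expect_pgf m z : binom_expect p m (pow z) = (1 - p + p * z) ^ m.
Proof.
  induction m as [|m IH]; simpl.
  - reflexivity.
  - rewrite binom_expect_scal, IH. ring.
Qed.

Lemma binom_expect_one m : binom_expect p m (fun _ => 1) = 1.
Proof.
  rewrite (binom_expect_ext m _ (pow 1)) by (intros; rewrite pow1; reflexivity).
  rewrite binom_expect_pgf. replace (1 - p + p * 1) with 1 by ring. apply pow1.
Qed.

Lemma binom_expect_zero m :
  forall g, (forall k, (k <= m)%nat -> g k = 0) -> binom_expect p m g = 0.
Proof.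
  induction m as [|m IH]; intros g H; simpl.
  - apply H; lia.
  - rewrite (IH g), (IH (fun k => g (S k))); [ring | |]; intros k Hk; apply H; lia.
Qed.

Lemma binom_expect_ind_eq m : forall i,
  binom_expect p m (ind_eq i)
  = if (i <=? m)%nat then C m i * p ^ i * (1 - p) ^ (m - i) else 0.
Proof.
  induction m as [|m IH]; intros i; simpl.
  - unfold ind_eq. destruct i; simpl; [rewrite C_n_0; ring | reflexivity].
  - destruct i as [|i].
    + rewrite (binom_expect_zero m (fun k => ind_eq 0 (S k))) by reflexivity.
      rewrite IH. simpl. rewrite !C_n_0, Nat.sub_0_r. ring.
    + rewrite (binom_expect_ext m (fun k => ind_eq (S i) (S k)) (ind_eq i)) by reflexivity.
      rewrite !IH. simpl (S i <=? S m)%nat.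
      destruct (Nat.leb_spec (S i) m), (Nat.leb_spec i m); try lia.
      * rewrite <- pascal by lia.
        replace (m - i)%nat with (S (m - S i)) by lia. simpl. ring.
      * replace i with m by lia. rewrite Nat.sub_diag.
        rewrite !C_n_n. simpl. ring.
      * ring.
Qed.

End BinomExpect.

Lemma fold_right_Rplus_init (l : list R) x :
  fold_right Rplus x l = fold_right Rplus 0 l + x.
Proof. induction l as [|a l IH]; simpl; [ring | rewrite IH; ring]. Qed.

Lemma w_0 i p : w 0 i p = if (i =? 0)%nat then 1 else 0.
Proof. unfold w. destruct i; simpl; [rewrite C_n_0; ring | reflexivity]. Qed.

Lemma w_S n i p :
  w (S n) i p = w n i p
    + (if (i <=? S n)%nat then C (S n) i * p ^ i * (1 - p) ^ (S n - i) else 0).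
Proof.
  unfold w. destruct (Nat.leb_spec i (S n)) as [H|H].
  - replace (S (S n) - i)%nat with (S (S n - i)) by lia.
    rewrite seq_S, map_app, fold_right_app. cbn [map fold_right].
    replace (i + (S n - i))%nat with (S n) by lia.
    rewrite fold_right_Rplus_init. ring.
  - replace (S (S n) - i)%nat with 0%nat by lia.
    replace (S n - i)%nat with 0%nat by lia. simpl. ring.
Qed.

(* The [j]-th summand of [p * w n i p] is the probability that the [(i+1)]-st
   success occurs at trial [j + 1]. *)
Lemma p_mul_w p n : forall i, p * w n i p = binom_expect p (S n) (ind_ge (S i)).
Proof.
  induction n as [|n IH]; intros i.
  - rewrite w_0. unfold ind_ge. destruct i; simpl; ring.
  - rewrite w_S, <- binom_expect_ind_eq.
    change (binom_expect p (S (S n)) (ind_ge (S i))) with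
      ((1 - p) * binom_expect p (S n) (ind_ge (S i))
       + p * binom_expect p (S n) (fun k => ind_ge (S i) (S k))).
    rewrite (binom_expect_ext p (S n) (fun k => ind_ge (S i) (S k))
               (fun k => ind_ge (S i) k + ind_eq i k)).
    + rewrite binom_expect_add, <- IH. ring.
    + intros k. unfold ind_ge, ind_eq. simpl (S i <=? S k)%nat.
      destruct (Nat.leb_spec i k), (Nat.leb_spec (S i) k), (Nat.eqb_spec k i);
        try lia; ring.
Qed.

Lemma w_eq_div p n i : 0 < p -> w n i p = binom_expect p (S n) (ind_ge (S i)) / p.
Proof. intros Hp. rewrite <- p_mul_w. field. lra. Qed.

Lemma inv_sub_w p n i : 0 < p ->
  1 / p - w n i p = binom_expect p (S n) (fun k => 1 - ind_ge (S i) k) / p.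
Proof.
  intros Hp.
  rewrite (binom_expect_ext p (S n) _ (fun k => 1 * 1 + (-1) * ind_ge (S i) k))
    by (intros; ring).
  rewrite binom_expect_lin, binom_expect_one, <- p_mul_w. field. lra.
Qed.

Lemma exp_le_compat x y : x <= y -> exp x <= exp y.
Proof. intros [H|<-]; [left; apply exp_increasing; exact H | right; reflexivity]. Qed.

Lemma exp_pow b n : exp b ^ n = exp (INR n * b).
Proof.
  induction n as [|n IH].
  - simpl. rewrite Rmult_0_l, exp_0. reflexivity.
  - rewrite S_INR. simpl. rewrite IH, <- exp_plus. f_equal. ring.
Qed.

Lemma pow_le_exp a b n : 0 <= a -> a <= exp b -> a ^ n <= exp (INR n * b).
Proof. intros H0 H1. rewrite <- exp_pow. apply pow_incr. lra. Qed.

(* [(1 + x) (1 - x + 2 x^2) = 1 + x^2 (1 + 2 x)]. *)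
Lemma inv_1_plus_le_exp x : -1/2 <= x -> / (1 + x) <= exp (- x + 2 * x ^ 2).
Proof.
  intros Hx. apply Rle_trans with (1 + (- x + 2 * x ^ 2)); [| apply exp_ineq1_le].
  apply Rmult_le_reg_l with (1 + x); [lra |]. rewrite Rinv_r by lra.
  assert (0 <= x ^ 2 * (1 + 2 * x)) by (apply Rmult_le_pos; nra). nra.
Qed.

(* Markov's inequality applied to [(1 + x) ^ K], with the bounds
   [1 + p x <= exp (p x)] and [inv_1_plus_le_exp]. *)
Lemma binom_expect_le_exp p m s x g : 0 <= p <= 1 -> -1/2 <= x ->
  (forall k, (1 + x) ^ s * g k <= (1 + x) ^ k) ->
  binom_expect p m g <= exp (INR s * (- x + 2 * x ^ 2) + INR m * (p * x)).
Proof.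
  intros Hp Hx Hg.
  assert (Hzs : 0 < (1 + x) ^ s) by (apply pow_lt; lra).
  apply Rle_trans with (binom_expect p m (fun k => / (1 + x) ^ s * (1 + x) ^ k)).
  { apply binom_expect_mono; [exact Hp |]. intros k.
    apply Rmult_le_reg_l with ((1 + x) ^ s); [exact Hzs |].
    rewrite <- Rmult_assoc, Rinv_r, Rmult_1_l by lra. apply Hg. }
  rewrite binom_expect_scal, binom_expect_pgf, <- pow_inv, exp_plus.
  apply Rmult_le_compat.
  - apply pow_le. left; apply Rinv_0_lt_compat; lra.
  - apply pow_le. nra.
  - apply pow_le_exp; [left; apply Rinv_0_lt_compat; lra | apply inv_1_plus_le_exp; lra].
  - apply pow_le_exp; [nra |].
    replace (1 - p + p * (1 + x)) with (1 + p * x) by ring. apply exp_ineq1_le.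
Qed.

(* The exponent of [binom_expect_le_exp] for [x = -+ t / (4 m)], in both tails. *)
Lemma chernoff_exponent m s t : 0 < m -> s <= m ->
  - t * (t / (4 * m)) + 2 * s * (t / (4 * m)) ^ 2 <= - t ^ 2 / (8 * m).
Proof.
  intros Hm Hs.
  replace (- t * (t / (4 * m)) + 2 * s * (t / (4 * m)) ^ 2)
    with (- t ^ 2 / (8 * m) - t ^ 2 * (m - s) / (8 * m ^ 2)) by (field; lra).
  assert (0 <= t ^ 2 * (m - s) / (8 * m ^ 2)).
  { apply Rmult_le_pos; [nra | left; apply Rinv_0_lt_compat; nra]. }
  lra.
Qed.

Lemma binom_lower_tail p m i : 0 <= p <= 1 -> INR i < INR m * p ->
  binom_expect p m (fun k => 1 - ind_ge (S i) k)
  <= exp (- (INR m * p - INR i) ^ 2 / (8 * INR m)).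
Proof.
  intros Hp Hi.
  assert (Hi0 := pos_INR i).
  assert (HM : 0 < INR m) by nra.
  set (t := INR m * p - INR i).
  set (d := t / (4 * INR m)).
  assert (Hd : 0 <= d <= 1/4).
  { unfold d, t. split; [apply Rmult_le_pos; [lra | left; apply Rinv_0_lt_compat; lra] |].
    apply Rmult_le_reg_r with (4 * INR m); [lra |]. field_simplify; nra. }
  apply Rle_trans with (exp (INR i * (- - d + 2 * (- d) ^ 2) + INR m * (p * - d))).
  - apply binom_expect_le_exp; [lra | lra |]. intros k. unfold ind_ge.
    destruct (Nat.leb_spec (S i) k) as [Hk|Hk].
    + rewrite Rminus_diag, Rmult_0_r. apply pow_le. lra.
    + replace i with (k + (i - k))%nat by lia. rewrite pow_add.
      assert (0 <= (1 + - d) ^ k) by (apply pow_le; lra).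
      assert ((1 + - d) ^ (i - k) <= 1).
      { apply Rle_trans with (1 ^ (i - k)); [apply pow_incr; lra | rewrite pow1; lra]. }
      rewrite Rminus_0_r, Rmult_1_r. nra.
  - apply exp_le_compat.
    replace (INR i * (- - d + 2 * (- d) ^ 2) + INR m * (p * - d))
      with (- t * d + 2 * INR i * d ^ 2) by (unfold t; ring).
    apply chernoff_exponent; nra.
Qed.

Lemma binom_upper_tail p m s : 0 <= p <= 1 -> (s <= m)%nat -> INR m * p < INR s ->
  binom_expect p m (ind_ge s) <= exp (- (INR s - INR m * p) ^ 2 / (8 * INR m)).
Proof.
  intros Hp Hsm Hs.
  assert (Hs0 : INR s <= INR m) by (apply le_INR; exact Hsm).
  assert (HM : 0 < INR m) by nra.
  set (t := INR s - INR m * p).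
  set (d := t / (4 * INR m)).
  assert (Hd : 0 <= d) by (unfold d, t; apply Rmult_le_pos; [lra | left; apply Rinv_0_lt_compat; lra]).
  apply Rle_trans with (exp (INR s * (- d + 2 * d ^ 2) + INR m * (p * d))).
  - apply binom_expect_le_exp; [lra | lra |]. intros k. unfold ind_ge.
    destruct (Nat.leb_spec s k) as [Hk|Hk].
    + rewrite Rmult_1_r. apply Rle_pow; [lra | exact Hk].
    + rewrite Rmult_0_r. apply pow_le. lra.
  - apply exp_le_compat.
    replace (INR s * (- d + 2 * d ^ 2) + INR m * (p * d))
      with (- t * d + 2 * INR s * d ^ 2) by (unfold t; ring).
    apply chernoff_exponent; lra.
Qed.

Lemma w_above n i p : (n < i)%nat -> w n i p = 0.
Proof. intros H. unfold w. replace (S n - i)%nat with 0%nat by lia. reflexivity. Qed.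

Lemma ln_le_compat x y : 0 < x -> x <= y -> ln x <= ln y.
Proof. intros Hx [H|<-]; [left; apply ln_increasing; assumption | right; reflexivity]. Qed.

(* With [u = x ^ (1/4)]: [ln x = 4 ln u < 4 u <= c u ^ 2]. *)
Lemma ln_le_mul_sqrt c x : 0 < c -> (4 / c) ^ 4 <= x -> ln x <= c * sqrt x.
Proof.
  intros Hc Hx.
  assert (H4c : 0 < 4 / c) by (apply Rdiv_lt_0_compat; lra).
  assert (Hx0 : 0 < x) by (assert (0 < (4 / c) ^ 4) by (apply pow_lt; lra); lra).
  set (u := sqrt (sqrt x)).
  assert (Hsq : sqrt x = u * u) by (unfold u; rewrite sqrt_sqrt; [reflexivity | apply sqrt_pos]).
  assert (Hxu : x = u ^ 4).
  { replace (u ^ 4) with (sqrt x * sqrt x) by (rewrite Hsq; ring). rewrite sqrt_sqrt; lra. }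
  assert (Hu : 4 / c <= u).
  { replace (4 / c) with (sqrt (sqrt (((4 / c) ^ 2) ^ 2))) by (rewrite !sqrt_pow2; nra).
    unfold u. apply sqrt_le_1; [apply sqrt_pos | apply sqrt_pos |].
    apply sqrt_le_1; [nra | lra | rewrite <- pow_mult; exact Hx]. }
  assert (Hcu : 4 <= c * u).
  { apply Rmult_le_compat_l with (r := c) in Hu; [| lra].
    replace (c * (4 / c)) with 4 in Hu by (field; lra). exact Hu. }
  assert (Hlnu : ln u <= u - 1).
  { pose proof (exp_ineq1_le (ln u)). rewrite exp_ln in H by lra. lra. }
  rewrite Hsq, Hxu, ln_pow by lra. simpl. nra.
Qed.

Lemma INR_to_nat_floorR x : 0 <= x ->
  INR (Z.to_nat (floorR x)) <= x /\ x - 1 < INR (Z.to_nat (floorR x)).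
Proof.
  intros Hx. unfold floorR. destruct (base_Int_part x) as [H1 H2].
  assert (H0 : (0 <= Int_part x)%Z) by (assert (Hlt : (-1 < Int_part x)%Z) by (apply lt_IZR; lra); lia).
  rewrite INR_IZR_INZ, Z2Nat.id by exact H0. lra.
Qed.

Definition rate (n : nat) : R := lnN n / 128.

Lemma rate_nonneg n : 0 <= rate n.
Proof.
  unfold rate, lnN. destruct n as [|n].
  - simpl INR. unfold ln. destruct (Rlt_dec 0 0) as [H|H]; [exfalso |]; lra.
  - assert (0 <= ln (INR (S n))).
    { rewrite <- ln_1. apply ln_le_compat; [lra |]. rewrite S_INR. pose proof (pos_INR n). lra. }
    lra.
Qed.

Lemma BigTheta_rate : BigTheta rate lnN.
Proof.
  exists (1 / 128), (1 / 128). split; [lra | split; [lra |]].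
  exists 0%nat. intros n _. unfold rate. split; right; field.
Qed.

Section LargeN.

Variable p : R.
Hypothesis hp0 : 0 < p.
Hypothesis hp1 : p < 1.

Definition large_enough (n : nat) : Prop :=
  (2 <= n)%nat /\ 2 + 128 * - ln p <= ln (INR n) /\ ln (INR n) <= p * sqrt (INR n).

Lemma eventually_large_enough : exists N, forall n, (N <= n)%nat -> large_enough n.
Proof.
  set (K := 2 + 128 * - ln p).
  destruct (INR_unbounded (exp K + (4 / p) ^ 4 + 2)) as [N HN].
  exists N. intros n Hn.
  assert (HnN : INR N <= INR n) by (apply le_INR; exact Hn).
  assert (HK : 0 < exp K) by apply exp_pos.
  assert (Hp4 : 0 < (4 / p) ^ 4) by (apply pow_lt; apply Rdiv_lt_0_compat; lra).
  split; [| split].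
  - destruct (le_lt_dec 2 n) as [H|H]; [exact H | exfalso].
    assert (INR n <= 1) by (replace 1 with (INR 1) by reflexivity; apply le_INR; lia).
    lra.
  - fold K. rewrite <- (ln_exp K). apply ln_le_compat; lra.
  - apply ln_le_mul_sqrt; lra.
Qed.

Lemma eps_large_enough n : large_enough n ->
  2 <= eps n /\ eps n <= INR n * p /\ eps n ^ 2 = INR n * ln (INR n) ^ 2.
Proof.
  intros [Hn [HL Hsq]].
  assert (HlnP : ln p < 0) by (rewrite <- ln_1; apply ln_increasing; lra).
  assert (Heps : eps n = sqrt (INR n) * ln (INR n)).
  { unfold eps. replace (2 <=? n)%nat with true by (symmetry; apply Nat.leb_le; exact Hn).
    reflexivity. }
  assert (HX : 2 <= INR n) by (replace 2 with (INR 2) by reflexivity; apply le_INR; exact Hn).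
  assert (Hss : sqrt (INR n) * sqrt (INR n) = INR n) by (apply sqrt_sqrt; lra).
  assert (Hs1 : 1 <= sqrt (INR n)) by (rewrite <- sqrt_1; apply sqrt_le_1; lra).
  rewrite Heps. split; [| split].
  - nra.
  - apply Rle_trans with (sqrt (INR n) * (p * sqrt (INR n))); [apply Rmult_le_compat_l; lra |].
    replace (sqrt (INR n) * (p * sqrt (INR n))) with (p * (sqrt (INR n) * sqrt (INR n))) by ring.
    rewrite Hss. lra.
  - replace ((sqrt (INR n) * ln (INR n)) ^ 2)
      with (sqrt (INR n) * sqrt (INR n) * ln (INR n) ^ 2) by ring.
    rewrite Hss. reflexivity.
Qed.

Lemma gaussian_le_decay n t : large_enough n -> INR n * ln (INR n) ^ 2 / 4 <= t ^ 2 ->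
  exp (- t ^ 2 / (8 * INR (S n))) <= p * Rpower (INR n) (- rate n).
Proof.
  intros [Hn [HL _]] Ht.
  assert (HlnP : ln p < 0) by (rewrite <- ln_1; apply ln_increasing; lra).
  assert (HX : 2 <= INR n) by (replace 2 with (INR 2) by reflexivity; apply le_INR; exact Hn).
  rewrite S_INR.
  set (X := INR n) in *. set (L := ln X) in *.
  unfold Rpower, rate, lnN. fold X L.
  rewrite <- (exp_ln p) at 1 by lra. rewrite <- exp_plus. apply exp_le_compat.
  assert (HA : L ^ 2 / 64 <= t ^ 2 / (8 * (X + 1))).
  { apply Rmult_le_reg_r with (8 * (X + 1)); [lra |].
    replace (t ^ 2 / (8 * (X + 1)) * (8 * (X + 1))) with (t ^ 2) by (field; lra).
    assert (0 <= L ^ 2) by nra. nra. }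
  replace (- t ^ 2 / (8 * (X + 1))) with (- (t ^ 2 / (8 * (X + 1)))) by (field; lra).
  nra.
Qed.

Lemma w_lower_large_enough n : large_enough n ->
  w n (Z.to_nat (floorR (INR n * p - eps n))) p >= 1 / p - Rpower (INR n) (- rate n).
Proof.
  intros Hn. destruct (eps_large_enough n Hn) as [Heps2 [Hepsp Heps_sq]].
  destruct (INR_to_nat_floorR (INR n * p - eps n)) as [Hi1 Hi2]; [lra |].
  set (i := Z.to_nat (floorR (INR n * p - eps n))) in *.
  assert (HSn : INR (S n) = INR n + 1) by apply S_INR.
  assert (Ht : eps n <= INR (S n) * p - INR i) by (rewrite HSn; lra).
  assert (Htail := binom_lower_tail p (S n) i ltac:(lra) ltac:(lra)).
  assert (Hdecay := gaussian_le_decay n (INR (S n) * p - INR i) Hn ltac:(nra)).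
  assert (Hdef := inv_sub_w p n i hp0).
  assert (binom_expect p (S n) (fun k => 1 - ind_ge (S i) k) / p
          <= Rpower (INR n) (- rate n)).
  { apply Rmult_le_reg_l with p; [lra |].
    replace (p * (_ / p)) with (binom_expect p (S n) (fun k => 1 - ind_ge (S i) k))
      by (field; lra).
    lra. }
  lra.
Qed.

Lemma w_upper_large_enough n : large_enough n ->
  w n (Z.to_nat (floorR (INR n * p + eps n))) p <= Rpower (INR n) (- rate n).
Proof.
  intros Hn. destruct (eps_large_enough n Hn) as [Heps2 [Hepsp Heps_sq]].
  destruct (INR_to_nat_floorR (INR n * p + eps n)) as [Hj1 Hj2]; [nra |].
  set (j := Z.to_nat (floorR (INR n * p + eps n))) in *.
  assert (Hpos : 0 < Rpower (INR n) (- rate n)) by apply exp_pos.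
  destruct (le_lt_dec j n) as [Hjn|Hjn]; [| rewrite w_above by exact Hjn; lra].
  assert (HSn : INR (S n) = INR n + 1) by apply S_INR.
  assert (HSj : INR (S j) = INR j + 1) by apply S_INR.
  assert (Ht : eps n / 2 <= INR (S j) - INR (S n) * p) by (rewrite HSn, HSj; lra).
  assert (Htail := binom_upper_tail p (S n) (S j) ltac:(lra) ltac:(lia) ltac:(rewrite HSn, HSj; lra)).
  assert (Hdecay := gaussian_le_decay n (INR (S j) - INR (S n) * p) Hn ltac:(nra)).
  rewrite (w_eq_div p n j hp0).
  apply Rmult_le_reg_l with p; [lra |].
  replace (p * (_ / p)) with (binom_expect p (S n) (ind_ge (S j))) by (field; lra).
  lra.
Qed.

End LargeN.

Theorem corollary2 (p : R) (hp0 : 0 < p) (hp1 : p < 1) :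
  exists f g : nat -> R,
    (forall n, 0 <= f n) /\ (forall n, 0 <= g n) /\
    BigTheta f lnN /\ BigTheta g lnN /\
    exists N : nat, forall n : nat, (N <= n)%nat ->
      w n (Z.to_nat (floorR (INR n * p - eps n))) p
        >= 1 / p - Rpower (INR n) (- f n) /\
      w n (Z.to_nat (floorR (INR n * p + eps n))) p
        <= Rpower (INR n) (- g n).
Proof.
  exists rate, rate.
  split; [exact rate_nonneg |]. split; [exact rate_nonneg |].
  split; [exact BigTheta_rate |]. split; [exact BigTheta_rate |].
  destruct (eventually_large_enough p hp0 hp1) as [N HN].
  exists N. intros n Hn. split.
  - exact (w_lower_large_enough p hp0 hp1 n (HN n Hn)).
  - exact (w_upper_large_enough p hp0 hp1 n (HN n Hn)).
Qed.
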